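(* Let $S$ be an AG-groupoid with a left identity. Every bi-ideal of $S$ is prime if and only if every bi-ideal of $S$ is idempotent and the set of bi-ideals of $S$ is totally ordered under inclusion (for any bi-ideals $I,J$, either $I\subseteq J$ or $J\subseteq I$).
   Context: An AG-groupoid is a set $S$ with a binary operation satisfying $(ab)c=(cb)a$ for all $a,b,c\in S$. A left identity is an element $e$ with $ea=a$ for all $a\in S$. For nonempty subsets, $AB=\{ab:a\in A,b\in B\}$, $B^{2}=BB$. A bi-ideal of $S$ is a nonempty subset $B$ with $BB\subseteq B$ and $(BS)B\subseteq B$; it is idempotent if $B^{2}=B$. A bi-ideal $B$ is prime if for all bi-ideals $B_{1},B_{2}$ of $S$, $B_{1}B_{2}\subseteq B$ implies $B_{1}\subseteq B$ or $B_{2}\subseteq B$. *)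

Set Implicit Arguments.

Definition subset {S : Type} (A B : S -> Prop) : Prop := forall x, A x -> B x.

Definition setmul {S : Type} (op : S -> S -> S) (A B : S -> Prop) : S -> Prop :=
  fun z => exists a b, A a /\ B b /\ z = op a b.

Definition setT {S : Type} : S -> Prop := fun _ => True.

Definition nonempty {S : Type} (A : S -> Prop) : Prop := exists x, A x.

Definition AG_groupoid {S : Type} (op : S -> S -> S) : Prop :=
  forall a b c, op (op a b) c = op (op c b) a.

Definition left_identity {S : Type} (op : S -> S -> S) (e : S) : Prop :=
  forall a, op e a = a.

Definition bi_ideal {S : Type} (op : S -> S -> S) (B : S -> Prop) : Prop :=
  nonempty B /\ subset (setmul op B B) B /\
  subset (setmul op (setmul op B setT) B) B.

Definition idempotent_set {S : Type} (op : S -> S -> S) (B : S -> Prop) : Prop :=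
  subset (setmul op B B) B /\ subset B (setmul op B B).

Definition prime_bi_ideal {S : Type} (op : S -> S -> S) (B : S -> Prop) : Prop :=
  bi_ideal op B /\
  forall B1 B2, bi_ideal op B1 -> bi_ideal op B2 ->
    subset (setmul op B1 B2) B -> subset B1 B \/ subset B2 B.


(* The proof works in the algebra of subsets of S.  From the defining law
   (ab)c = (cb)a and the left identity one gets the medial law
   (ab)(cd) = (ac)(bd) and the paramedial law (ab)(cd) = (db)(ca); lifted to
   subsets they give the inclusions (AB)C <= (CB)A, (AB)(CD) <= (AC)(BD) and
   (AB)(CD) <= (DB)(CA).  With these we show:
   - the product IJ of two bi-ideals is a bi-ideal;
   - for idempotent bi-ideals, IJ <= JI (so in fact IJ = JI);
   - if I <= IJ and I <= JI then I <= J (absorption).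
   Then: a prime B^2 contains B B, so B <= B^2; a prime IJ contains I J, so
   I <= IJ or J <= IJ, and absorption (using IJ = JI) yields I <= J or J <= I.
   Conversely, if B1 <= B2 and B1 B2 <= B then B1 = B1 B1 <= B1 B2 <= B. *)

Section AGSubsets.

Context {S : Type} {op : S -> S -> S} {e : S}.
Hypothesis HAG : AG_groupoid op.
Hypothesis He : left_identity op e.

Local Infix "**" := (setmul op) (at level 40, left associativity).
Local Infix "<<=" := subset (at level 70).

Lemma medial a b c d : op (op a b) (op c d) = op (op a c) (op b d).
Proof. rewrite HAG, (HAG c d b), HAG. reflexivity. Qed.

Lemma left_permute a b c : op a (op b c) = op b (op a c).
Proof.
  transitivity (op (op e a) (op b c)); [rewrite He; reflexivity|].
  rewrite medial, He. reflexivity.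
Qed.

Lemma paramedial a b c d : op (op a b) (op c d) = op (op d b) (op c a).
Proof.
  rewrite medial, left_permute, HAG, <- left_permute, medial. reflexivity.
Qed.

Lemma subset_refl (A : S -> Prop) : A <<= A.
Proof. intros x Hx. exact Hx. Qed.

Lemma subset_trans {A B C : S -> Prop} : A <<= B -> B <<= C -> A <<= C.
Proof. intros HAB HBC x Hx. exact (HBC x (HAB x Hx)). Qed.

Lemma subset_setT (A : S -> Prop) : A <<= setT.
Proof. intros x _. exact I. Qed.

Lemma setmul_mono {A A' B B' : S -> Prop} :
  A <<= A' -> B <<= B' -> A ** B <<= A' ** B'.
Proof.
  intros HA HB z [a [b [Ha [Hb ->]]]]. exists a, b. auto.
Qed.

Lemma setmul_AG (A B C : S -> Prop) : A ** B ** C <<= C ** B ** A.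
Proof.
  intros z [x [c [[a [b [Ha [Hb ->]]]] [Hc ->]]]].
  rewrite HAG. exists (op c b), a. split; [exists c, b|]; auto.
Qed.

Lemma setmul_medial (A B C D : S -> Prop) :
  (A ** B) ** (C ** D) <<= (A ** C) ** (B ** D).
Proof.
  intros z [x [y [[a [b [Ha [Hb ->]]]] [[c [d [Hc [Hd ->]]]] ->]]]].
  rewrite medial. exists (op a c), (op b d).
  split; [exists a, c | split; [exists b, d|]]; auto.
Qed.

Lemma setmul_paramedial (A B C D : S -> Prop) :
  (A ** B) ** (C ** D) <<= (D ** B) ** (C ** A).
Proof.
  intros z [x [y [[a [b [Ha [Hb ->]]]] [[c [d [Hc [Hd ->]]]] ->]]]].
  rewrite paramedial. exists (op d b), (op c a).
  split; [exists d, b | split; [exists c, a|]]; auto.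
Qed.

Lemma setmul_bi_ideal {I J : S -> Prop} :
  bi_ideal op I -> bi_ideal op J -> bi_ideal op (I ** J).
Proof.
  intros [[i Hi] [HII HISI]] [[j Hj] [HJJ _]]. split; [|split].
  - exists (op i j), i, j. auto.
  - (* (IJ)(IJ) <= (II)(JJ) <= IJ *)
    apply (subset_trans (setmul_medial I J I J)).
    exact (setmul_mono HII HJJ).
  - (* ((IJ)S)(IJ) <= ((SJ)I)(IJ) <= (JI)(I(SJ)) <= ((I(SJ))I)J <= ((IS)I)J <= IJ *)
    apply (subset_trans (setmul_mono (setmul_AG I J setT) (subset_refl _))).
    apply (subset_trans (setmul_paramedial _ _ _ _)).
    apply (subset_trans (setmul_AG _ _ _)).
    apply setmul_mono; [|apply subset_refl].
    apply (subset_trans (setmul_mono (setmul_mono (subset_refl _) (subset_setT _))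
                                     (subset_refl _))).
    exact HISI.
Qed.

(* Idempotent subsets closed under products commute:
   IJ <= (II)(JJ) <= (JI)(JI) <= (JJ)(II) <= JI. *)
Lemma idempotent_setmul_comm {I J : S -> Prop} :
  idempotent_set op I -> idempotent_set op J -> I ** J <<= J ** I.
Proof.
  intros [HII HIsq] [HJJ HJsq].
  apply (subset_trans (setmul_mono HIsq HJsq)).
  apply (subset_trans (setmul_paramedial _ _ _ _)).
  apply (subset_trans (setmul_medial _ _ _ _)).
  exact (setmul_mono HJJ HII).
Qed.

(* Absorption: if I <= IJ and I <= JI for a bi-ideal J, then
   I <= IJ <= (JI)J <= (JS)J <= J. *)
Lemma bi_ideal_absorb {I J : S -> Prop} :
  bi_ideal op J -> I <<= I ** J -> I <<= J ** I -> I <<= J.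
Proof.
  intros [_ [_ HJSJ]] HIJ HJI.
  apply (subset_trans HIJ).
  apply (subset_trans (setmul_mono HJI (subset_refl _))).
  apply (subset_trans (setmul_mono (setmul_mono (subset_refl _) (subset_setT I))
                                   (subset_refl _))).
  exact HJSJ.
Qed.

(* If all bi-ideals are prime, each bi-ideal B lies in the bi-ideal B^2. *)
Lemma prime_idempotent :
  (forall B, bi_ideal op B -> prime_bi_ideal op B) ->
  forall B, bi_ideal op B -> idempotent_set op B.
Proof.
  intros Hprime B HB. split; [apply HB|].
  destruct (Hprime _ (setmul_bi_ideal HB HB)) as [_ HBB].
  destruct (HBB B B HB HB (subset_refl _)) as [H | H]; exact H.
Qed.

(* If all bi-ideals are prime, the bi-ideals form a chain: the prime IJ
   contains I J, and absorption with IJ = JI concludes. *)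
Lemma prime_total :
  (forall B, bi_ideal op B -> prime_bi_ideal op B) ->
  forall I J, bi_ideal op I -> bi_ideal op J -> I <<= J \/ J <<= I.
Proof.
  intros Hprime I J HI HJ.
  pose proof (prime_idempotent Hprime _ HI) as HIid.
  pose proof (prime_idempotent Hprime _ HJ) as HJid.
  pose proof (idempotent_setmul_comm HIid HJid) as Hcomm.
  destruct (Hprime _ (setmul_bi_ideal HI HJ)) as [_ HIJ].
  destruct (HIJ I J HI HJ (subset_refl _)) as [HIsub | HJsub].
  - left. exact (bi_ideal_absorb HJ HIsub (subset_trans HIsub Hcomm)).
  - right. exact (bi_ideal_absorb HI (subset_trans HJsub Hcomm) HJsub).
Qed.

(* Conversely, in a chain of idempotent bi-ideals every bi-ideal is prime:
   if B1 <= B2 then B1 <= B1 B1 <= B1 B2 <= B, and symmetrically.  This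
   direction holds in any groupoid. *)
Lemma chain_idempotent_prime :
  (forall B, bi_ideal op B -> idempotent_set op B) ->
  (forall I J, bi_ideal op I -> bi_ideal op J -> I <<= J \/ J <<= I) ->
  forall B, bi_ideal op B -> prime_bi_ideal op B.
Proof.
  intros Hid Htotal B HB. split; [exact HB|].
  intros B1 B2 H1 H2 Hsub.
  destruct (Htotal B1 B2 H1 H2) as [H12 | H21].
  - left. apply (subset_trans (proj2 (Hid B1 H1))).
    exact (subset_trans (setmul_mono (subset_refl _) H12) Hsub).
  - right. apply (subset_trans (proj2 (Hid B2 H2))).
    exact (subset_trans (setmul_mono H21 (subset_refl _)) Hsub).
Qed.

End AGSubsets.

Theorem theorem1 (S : Type) (op : S -> S -> S) (e : S)
  (HAG : AG_groupoid op) (He : left_identity op e) :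
  (forall B, bi_ideal op B -> prime_bi_ideal op B) <->
  ((forall B, bi_ideal op B -> idempotent_set op B) /\
   (forall I J, bi_ideal op I -> bi_ideal op J -> subset I J \/ subset J I)).
Proof.
  split.
  - intros Hprime. split.
    + exact (prime_idempotent HAG He Hprime).
    + exact (prime_total HAG He Hprime).
  - intros [Hid Htotal]. exact (chain_idempotent_prime Hid Htotal).
Qed.
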